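(* Let $\varepsilon\in(0,1)$. Given a parameter $C\le\frac{1}{4\varepsilon}$ for the number of coordinates with frequency more than $1$, and a stream whose number of distinct elements is at least $\Omega\left(\frac{1}{\varepsilon^2}\right)$, there exists a one-pass streaming algorithm that uses $O\left(\frac{C}{\varepsilon}\log n\right)$ bits of space and outputs a $(1+\varepsilon)$-approximation to the number of distinct elements in the stream with probability at least $0.98$.
   Context: Streaming model: a stream of insertions of items from the universe $[n]$, of length polynomially bounded in $n$, defines a frequency vector $f\in\mathbb{Z}_{\ge 0}^n$ ($f_i$ is the number of occurrences of $i$). The number of distinct elements is $F_0=|\{i:f_i\neq 0\}|$. The algorithm makes a single pass over the stream; a $(1+\varepsilon)$-approximation to $F_0$ is a value $\hat F$ with $(1-\varepsilon)F_0\le\hat F\le(1+\varepsilon)F_0$. *)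

From HB Require Import structures.
From mathcomp Require Import all_boot all_order all_algebra.
Set Implicit Arguments. Unset Strict Implicit. Unset Printing Implicit Defensive.
Import Order.TTheory GRing.Theory Num.Theory.
Local Open Scope ring_scope.

Definition freq (n : nat) (sigma : seq 'I_n) (i : 'I_n) : nat := count_mem i sigma.

Definition F0 (n : nat) (sigma : seq 'I_n) : nat :=
  #|[set i : 'I_n | freq sigma i != 0%N]|.

Definition num_heavy (n : nat) (sigma : seq 'I_n) : nat :=
  #|[set i : 'I_n | (1 < freq sigma i)%N]|.

(* A one-pass randomized streaming algorithm over the universe [n] whose memory
   consists of s bits: its memory states are the 2^s bit strings, encoded as
   'I_(2^s).  It starts in a random state (distribution [init]), on each stream
   item it moves to a random new state (distribution [trans q i], so fresh
   random coins are allowed, but any randomness that is to be remembered must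
   be stored in the s bits), and at the end it outputs [out q]. *)
Record stream_alg (R : realFieldType) (n s : nat) := StreamAlg {
  init  : {ffun 'I_(2 ^ s) -> R};
  trans : 'I_(2 ^ s) -> 'I_n -> {ffun 'I_(2 ^ s) -> R};
  out   : 'I_(2 ^ s) -> R
}.

Definition is_distr (R : realFieldType) (T : finType) (d : {ffun T -> R}) : Prop :=
  (forall x, 0 <= d x) /\ \sum_(x : T) d x = 1.

Definition valid_alg (R : realFieldType) (n s : nat) (A : stream_alg R n s) : Prop :=
  is_distr (init A) /\ forall q i, is_distr (trans A q i).

Definition run (R : realFieldType) (n s : nat) (A : stream_alg R n s)
    (sigma : seq 'I_n) : {ffun 'I_(2 ^ s) -> R} :=
  foldl (fun (d : {ffun 'I_(2 ^ s) -> R}) i => [ffun q' => \sum_(q : 'I_(2 ^ s)) d q * trans A q i q'])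
        (init A) sigma.

Definition success_prob (R : realFieldType) (n s : nat) (A : stream_alg R n s)
    (eps : R) (sigma : seq 'I_n) : R :=
  \sum_(q : 'I_(2 ^ s) | ((1 - eps) * (F0 sigma)%:R <= out A q)
                          && (out A q <= (1 + eps) * (F0 sigma)%:R))
     run A sigma q.

From HB Require Import structures.
From mathcomp Require Import all_boot all_order all_algebra.
From mathcomp Require Import zify ring lra.
Set Implicit Arguments. Unset Strict Implicit. Unset Printing Implicit Defensive.
Import Order.TTheory GRing.Theory Num.Theory.

(* The algorithm is deterministic: a Misra-Gries summary with [k = C + N]
   counters, [N ~ C / eps], which also records the stream length [m] and the
   number [D] of decrement rounds.  Since [F0 = m - sum_x (f_x - 1)_+], it outputs
   [m - sum_x (g_x - 1)_+] for its counters [g]; as [f_x - D <= g_x <= f_x], only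
   the at most [C] heavy elements contribute to the error, at most [D] each.  A
   decrement round discards [k + 1] occurrences, and over all rounds at most [D]
   occurrences of each heavy element and at most one of each other element are
   discarded, so [(k + 1) D <= C D + F0], i.e. [N D <= F0], and the error [C D] is
   at most [eps F0].  Storing only the support of the counters takes
   [O(k log (n |sigma|)) = O((C / eps) log n)] bits because [|sigma| <= n ^ p]. *)

Section Frequencies.
Variable n : nat.
Implicit Type s : seq 'I_n.

Lemma freq_rcons s y x : freq (rcons s y) x = freq s x + (y == x).
Proof. by rewrite /freq -cats1 count_cat /= addn0. Qed.

Lemma sum_freq s : \sum_(x < n) freq s x = size s.
Proof.
elim: s => [|y s IH]; first by rewrite big1.
rewrite /freq /= big_split /= -/(freq s) IH (bigD1 y) //= eqxx big1 ?addn0 //.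
by move=> x /negbTE; rewrite eq_sym => ->.
Qed.

Lemma F0_sum s : F0 s = \sum_(x < n) (freq s x != 0).
Proof. by rewrite /F0 -sum1_card big_mkcond /=; apply: eq_bigr => x _; rewrite inE. Qed.

Lemma num_heavy_sum s : num_heavy s = \sum_(x < n) (1 < freq s x).
Proof. by rewrite /num_heavy -sum1_card big_mkcond /=; apply: eq_bigr => x _; rewrite inE. Qed.

Lemma F0_le s : F0 s <= n.
Proof. by rewrite /F0 (leq_trans (max_card _)) ?card_ord. Qed.

Definition excess (f : 'I_n -> nat) : nat := \sum_(x < n) (f x).-1.

Lemma size_F0_excess s : size s = F0 s + excess (freq s).
Proof.
by rewrite -sum_freq F0_sum -big_split; apply: eq_bigr => x _; case: (freq s x).
Qed.

End Frequencies.

Section MisraGries.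
Variables (n k : nat).

Record mg_state := MGState { mg_len : nat; mg_drops : nat; mg_cnt : {ffun 'I_n -> nat} }.

Definition mg_support (g : {ffun 'I_n -> nat}) : {set 'I_n} := [set x | 0 < g x].

Definition mg_init : mg_state := MGState 0 0 [ffun=> 0].

(* When all [k] counters are busy and [y] is untracked, [y] is discarded together
   with one occurrence of every tracked element: [k.+1] occurrences per drop round. *)
Definition mg_step (t : mg_state) (y : 'I_n) : mg_state :=
  let: MGState m D g := t in
  if (0 < g y) || (#|mg_support g| < k) then MGState m.+1 D [ffun x => g x + (x == y)]
  else MGState m.+1 D.+1 [ffun x => (g x).-1].

Definition mg_sketch (s : seq 'I_n) : mg_state := foldl mg_step mg_init s.

Definition mg_estimate (t : mg_state) : nat := mg_len t - excess (mg_cnt t).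

Definition mg_inv (s : seq 'I_n) (t : mg_state) : Prop :=
  [/\ mg_len t = size s, #|mg_support (mg_cnt t)| <= k,
      forall x, mg_cnt t x <= freq s x, forall x, freq s x <= mg_cnt t x + mg_drops t
    & \sum_(x < n) mg_cnt t x + k.+1 * mg_drops t = mg_len t].

Lemma mg_support_incr (g : {ffun 'I_n -> nat}) y :
  mg_support [ffun x => g x + (x == y)] = y |: mg_support g.
Proof.
by apply/setP => x; rewrite !inE ffunE; case: eqP => [->|_]; rewrite ?addn1 ?addn0 ?orbF.
Qed.

Lemma mg_support_decr (g : {ffun 'I_n -> nat}) :
  mg_support [ffun x => (g x).-1] \subset mg_support g.
Proof. by apply/subsetP => x; rewrite !inE ffunE; case: (g x). Qed.

Lemma excess_add_card_support (g : {ffun 'I_n -> nat}) :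
  excess g + #|mg_support g| = \sum_(x < n) g x.
Proof.
rewrite -sum1_card [X in _ + X]big_mkcond /= -big_split /=.
by apply: eq_bigr => x _; rewrite inE; case: (g x) => //= m; rewrite addn1.
Qed.

Lemma mg_inv_init : mg_inv [::] mg_init.
Proof.
split => //= [|x|]; rewrite ?ffunE //.
- suff -> : mg_support [ffun=> 0] = set0 by rewrite cards0.
  by apply/setP => x; rewrite !inE ffunE.
- by rewrite big1 ?muln0 // => x _; rewrite ffunE.
Qed.

Lemma mg_inv_step s t y : mg_inv s t -> mg_inv (rcons s y) (mg_step t y).
Proof.
case: t => m D g [/= len_eq supp_le cnt_le_freq freq_le mass_eq]; rewrite /mg_step.
case: ifP => [/orP y_tracked | /norP[]]; last first.
  rewrite -!leqNgt leqn0 => /eqP y_cnt supp_ge.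
  have supp_eq : #|mg_support g| = k by apply/eqP; rewrite eqn_leq supp_le supp_ge.
  split => /= [||x|x|]; rewrite ?ffunE ?freq_rcons ?size_rcons.
  - by rewrite len_eq.
  - exact: leq_trans (subset_leq_card (mg_support_decr g)) supp_le.
  - by have := cnt_le_freq x; lia.
  - by have := freq_le x; case: (eqVneq y x) => [<-|_]; rewrite ?y_cnt /=; lia.
  - have -> : \sum_(x < n) [ffun x => (g x).-1] x = excess g.
      by apply: eq_bigr => x _; rewrite ffunE.
    by rewrite -mass_eq -(excess_add_card_support g) supp_eq mulnS; lia.
split => /= [||x|x|]; rewrite ?ffunE ?freq_rcons ?size_rcons.
- by rewrite len_eq.
- rewrite mg_support_incr cardsU1; case: y_tracked => [y_cnt|supp_lt].
    by rewrite [y \in _]inE y_cnt.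
  by apply: leq_trans (leq_add (leq_b1 _) (leqnn _)) _; rewrite add1n.
- by rewrite eq_sym leq_add.
- by rewrite eq_sym; have := freq_le x; case: (x == y); lia.
- have y_cnt : \sum_(x < n) (x == y) = 1 by rewrite (bigD1 y) //= eqxx big1 // => x /negbTE ->.
  under eq_bigr => x _ do rewrite ffunE.
  by rewrite big_split /= y_cnt -mass_eq addn1 addSn.
Qed.

Lemma mg_inv_sketch s : mg_inv s (mg_sketch s).
Proof.
elim/last_ind: s => [|s y IH]; first exact: mg_inv_init.
by rewrite /mg_sketch foldl_rcons; apply: mg_inv_step.
Qed.

Lemma mg_estimate_bounds s t : mg_inv s t ->
  F0 s <= mg_estimate t <= F0 s + num_heavy s * mg_drops t.
Proof.
case: t => m D g [/= len_eq _ cnt_le_freq freq_le _].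
rewrite /mg_estimate /= len_eq size_F0_excess.
have cnt_le : excess g <= excess (freq s).
  by apply: leq_sum => x _; have := cnt_le_freq x; lia.
have excess_le : excess (freq s) <= excess g + num_heavy s * D.
  rewrite num_heavy_sum big_distrl /= -big_split /=; apply: leq_sum => x _.
  by have := freq_le x; case: (freq s x) => [|[|f]] /=; lia.
by apply/andP; split; lia.
Qed.

Lemma mg_drops_bound s t : mg_inv s t ->
  k.+1 * mg_drops t <= num_heavy s * mg_drops t + F0 s.
Proof.
case: t => m D g [/= len_eq _ cnt_le_freq freq_le mass_eq].
rewrite -(leq_add2l (\sum_(x < n) g x)) mass_eq len_eq -sum_freq num_heavy_sum F0_sum.
rewrite big_distrl -!big_split; apply: leq_sum => x _.
by have := freq_le x; case: (freq s x) => [|[|f]] /=; lia.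
Qed.

End MisraGries.

Lemma mg_sketch_error (n C N : nat) (s : seq 'I_n) : num_heavy s <= C ->
  let t := mg_sketch (C + N) s in
  F0 s <= mg_estimate t <= F0 s + C * mg_drops t /\ N * mg_drops t <= F0 s.
Proof.
move=> heavy_le t; have inv : mg_inv (C + N) s t := mg_inv_sketch _ _.
have heavyD : num_heavy s * mg_drops t <= C * mg_drops t by rewrite leq_mul2r heavy_le orbT.
have /andP[est_ge est_le] := mg_estimate_bounds inv.
have := mg_drops_bound inv; rewrite mulSn mulnDl => drops_le.
split; [apply/andP; split | ]; lia.
Qed.

Section Packing.
Variables (n k M : nat) (x0 : 'I_n).

Definition mg_code := ('I_M.+1 * 'I_M.+1 * {ffun 'I_k -> 'I_n * 'I_M.+1})%type.

(* Only the support of the counters is stored, as a list of (element, count)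
   pairs padded with [(x0, 0)]; this is what makes the space linear in [k]. *)
Definition mg_pack (t : mg_state n) : mg_code :=
  let: MGState m D g := t in
  let l := enum (mg_support g) in
  (inord m, inord D,
   [ffun j : 'I_k => if j < size l then (nth x0 l j, inord (g (nth x0 l j))) else (x0, ord0)]).

Definition mg_unpack (c : mg_code) : mg_state n :=
  let: (m, D, h) := c in
  MGState m D [ffun x => \sum_(j < k) if (h j).1 == x then val (h j).2 else 0].

Definition mg_fits (t : mg_state n) : Prop :=
  [/\ mg_len t <= M, mg_drops t <= M, forall x, mg_cnt t x <= M
    & #|mg_support (mg_cnt t)| <= k].

Lemma mg_packK t : mg_fits t -> mg_unpack (mg_pack t) = t.
Proof.
case: t => m D g [/= m_le D_le cnt_le supp_le]; rewrite !inordK ?ltnS //; congr MGState.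
apply/ffunP => x; rewrite ffunE; set l := enum (mg_support g).
have size_l : size l <= k by rewrite /l -cardE.
transitivity (\sum_(j < k | j < size l) (nth x0 l j == x) * g x).
  rewrite [RHS]big_mkcond /=; apply: eq_bigr => j _; rewrite ffunE.
  case: (j < size l) => /=; last by case: (x0 == x).
  by case: eqP => [->|]; rewrite ?inordK ?ltnS ?mul1n ?mul0n.
rewrite -big_distrl /= -(big_ord_widen k (fun j => (nth x0 l j == x) : nat)) //.
rewrite -(big_mkord xpredT (fun j => (nth x0 l j == x) : nat)).
rewrite -(big_nth x0 xpredT (fun y => (y == x) : nat)).
have -> : \sum_(y <- l) (y == x : nat) = count_mem x l by rewrite -sum1_count [RHS]big_mkcond.
rewrite count_uniq_mem ?enum_uniq // /l mem_enum inE.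
by case: (posnP (g x)) => [->|gx_gt0]; rewrite ?muln0 ?gx_gt0 ?mul1n.
Qed.

Lemma card_mg_code : #|{: mg_code}| = M.+1 * M.+1 * (n * M.+1) ^ k.
Proof. by rewrite !card_prod card_ffun !card_prod !card_ord. Qed.

End Packing.

Lemma mg_sketch_fits n k M (s : seq 'I_n) : size s <= M -> mg_fits k M (mg_sketch k s).
Proof.
move=> size_le; have := mg_inv_sketch k s.
case: (mg_sketch k s) => m D g [/= len_eq supp_le cnt_le_freq _ mass_eq].
split => //= [||x].
- by rewrite len_eq.
- nia.
- exact: leq_trans (cnt_le_freq x) (leq_trans (count_size _ _) size_le).
Qed.

Definition mg_bits (n k M : nat) : nat := up_log 2 (n * M.+1) * (k + 2).

Lemma card_mg_code_le n k M : 0 < n -> #|{: mg_code n k M}| <= 2 ^ mg_bits n k M.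
Proof.
move=> n_gt0; rewrite card_mg_code /mg_bits expnM.
have M_le : M.+1 <= n * M.+1 by rewrite leq_pmull.
apply: (@leq_trans ((n * M.+1) ^ (k + 2))).
  by rewrite addn2 !expnS mulnA; apply: leq_mul => //; apply: leq_mul.
by rewrite leq_exp2r ?addn2 // up_logP.
Qed.

Section BitEncoding.
Variables (T : finType) (s : nat) (t0 : T).
Hypothesis card_le : #|T| <= 2 ^ s.

Definition encode_bits (t : T) : 'I_(2 ^ s) := widen_ord card_le (enum_rank t).

Definition decode_bits (q : 'I_(2 ^ s)) : T := nth t0 (enum T) q.

Lemma encode_bitsK : cancel encode_bits decode_bits.
Proof. exact: nth_enum_rank. Qed.

End BitEncoding.

Lemma foldl_encode (S Q X : Type) (f : S -> X -> S) (enc : S -> Q) (dec : Q -> S)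
    (z : S) (b : nat) :
  (forall xs, size xs <= b -> dec (enc (foldl f z xs)) = foldl f z xs) ->
  forall xs, size xs <= b ->
    foldl (fun q x => enc (f (dec q) x)) (enc z) xs = enc (foldl f z xs).
Proof.
move=> encK; elim/last_ind => [|xs x IH] //; rewrite size_rcons => size_le.
by rewrite !foldl_rcons IH ?encK // ltnW.
Qed.

Local Open Scope ring_scope.

Section Deterministic.
Variables (R : realFieldType) (n s : nat).

Definition point_distr (q : 'I_(2 ^ s)) : {ffun 'I_(2 ^ s) -> R} := [ffun q' => (q' == q)%:R].

Lemma point_distr_is_distr q : is_distr (point_distr q).
Proof.
split => [x|]; first by rewrite ffunE ler0n.
rewrite (bigD1 q) //= ffunE eqxx big1 ?addr0 // => x /negbTE x_neq.
by rewrite ffunE x_neq.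
Qed.

Definition det_alg (q0 : 'I_(2 ^ s)) (f : 'I_(2 ^ s) -> 'I_n -> 'I_(2 ^ s))
    (o : 'I_(2 ^ s) -> R) : stream_alg R n s :=
  StreamAlg (point_distr q0) (fun q i => point_distr (f q i)) o.

Variables (q0 : 'I_(2 ^ s)) (f : 'I_(2 ^ s) -> 'I_n -> 'I_(2 ^ s)) (o : 'I_(2 ^ s) -> R).

Lemma det_alg_valid : valid_alg (det_alg q0 f o).
Proof. by split => [|q i]; apply: point_distr_is_distr. Qed.

Lemma run_det_alg sigma : run (det_alg q0 f o) sigma = point_distr (foldl f q0 sigma).
Proof.
rewrite /run /=; elim: sigma q0 => [|i sigma IH] q //=.
rewrite -IH; congr foldl; apply/ffunP => q'; rewrite !ffunE.
rewrite (bigD1 q) //= !ffunE eqxx mul1r big1 ?addr0 // => x /negbTE x_neq.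
by rewrite ffunE x_neq mul0r.
Qed.

Lemma success_prob_det_alg eps sigma :
  let E := o (foldl f q0 sigma) in
  (1 - eps) * (F0 sigma)%:R <= E <= (1 + eps) * (F0 sigma)%:R ->
  success_prob (det_alg q0 f o) eps sigma = 1.
Proof.
move=> E E_ok; rewrite /success_prob run_det_alg big_mkcond /=.
rewrite (bigD1 (foldl f q0 sigma)) //= E_ok ffunE eqxx big1 ?addr0 // => x /negbTE x_neq.
by rewrite ffunE x_neq; case: ifP.
Qed.

End Deterministic.

Section MisraGriesAlgorithm.
Variables (R : realFieldType) (n k M : nat) (x0 : 'I_n).

Definition mg_encode (t : mg_state n) : 'I_(2 ^ mg_bits n k M) :=
  encode_bits (card_mg_code_le k M (leq_ltn_trans (leq0n _) (ltn_ord x0))) (mg_pack k M x0 t).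

Definition mg_decode (q : 'I_(2 ^ mg_bits n k M)) : mg_state n :=
  mg_unpack (decode_bits (mg_pack k M x0 (mg_init n)) q).

Definition mg_alg : stream_alg R n (mg_bits n k M) :=
  det_alg (mg_encode (mg_init n)) (fun q y => mg_encode (mg_step k (mg_decode q) y))
    (fun q => (mg_estimate (mg_decode q))%:R).

Lemma mg_alg_valid : valid_alg mg_alg.
Proof. exact: det_alg_valid. Qed.

Lemma mg_alg_success eps (sigma : seq 'I_n) : (size sigma <= M)%N ->
  let E := (mg_estimate (mg_sketch k sigma))%:R in
  (1 - eps) * (F0 sigma)%:R <= E <= (1 + eps) * (F0 sigma)%:R ->
  success_prob mg_alg eps sigma = 1.
Proof.
have decK s : (size s <= M)%N -> mg_decode (mg_encode (mg_sketch k s)) = mg_sketch k s.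
  by move=> size_le; rewrite /mg_decode encode_bitsK mg_packK //; apply: mg_sketch_fits.
move=> size_le E E_ok; apply: success_prob_det_alg.
by rewrite (foldl_encode decK size_le) decK.
Qed.

End MisraGriesAlgorithm.

Lemma up_log_mul_pow n p : (1 < n)%N ->
  (up_log 2 (n * (n ^ p).+1) <= (p + 2) * up_log 2 n)%N.
Proof.
move=> n_gt1; apply: up_log_min => //; apply: (@leq_trans (n ^ (p + 2))).
  have : (0 < n ^ p)%N by rewrite expn_gt0 ltnW.
  by rewrite expnD expnS expn1; nia.
by rewrite mulnC expnM leq_exp2r ?addn2 // up_logP.
Qed.

Lemma exists_nat_ceil (R : realFieldType) (x : R) (b : nat) : 0 <= x -> x <= b%:R ->
  exists N : nat, x <= N%:R <= x + 1.
Proof.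
move=> x_ge0 x_le_b.
have [N x_le_N N_min] := ex_minnP (ex_intro (fun N : nat => x <= N%:R) b x_le_b).
exists N; rewrite x_le_N /=; case: N x_le_N N_min => [|N] _ N_min; first by rewrite addr_ge0.
have : ~~ (x <= N%:R) by apply/negP => /N_min; rewrite ltnn.
by rewrite -ltNge -natr1 => /ltW; rewrite lerD2r.
Qed.

Lemma rel_approx_of_bounds (R : realFieldType) (eps : R) (F E C D N : nat) :
  0 <= eps -> C%:R <= eps * N%:R -> (N * D <= F)%N -> (F <= E <= F + C * D)%N ->
  (1 - eps) * F%:R <= E%:R <= (1 + eps) * F%:R.
Proof.
rewrite -!(ler_nat R) !natrD !natrM => eps_ge0 C_le ND_le /andP[E_ge E_le].
have D_ge0 : 0 <= D%:R :> R by [].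
have CD_le : C%:R * D%:R <= eps * F%:R.
  apply: le_trans (ler_wpM2r D_ge0 C_le) _.
  by rewrite -mulrA ler_wpM2l.
apply/andP; split; nra.
Qed.

Lemma mg_bits_le (R : realFieldType) (eps : R) (C N n p : nat) :
  0 < eps <= 1 -> 4 <= C%:R / eps -> N%:R <= C%:R / eps + 1 -> (1 < n)%N ->
  (mg_bits n (C + N) (n ^ p))%:R <= (3 * (p + 2))%:R * C%:R / eps * (up_log 2 n)%:R.
Proof.
move=> /andP[eps_gt0 eps_le1] Ceps_ge4 N_le n_gt1.
have C_le : C%:R <= C%:R / eps :> R by rewrite ler_peMr ?ler0n // invf_ge1.
have k_le : (C + N + 2)%:R <= 3 * (C%:R / eps) :> R by rewrite !natrD; lra.
have L_le := up_log_mul_pow p n_gt1; rewrite -(ler_nat R) in L_le.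
have -> : (3 * (p + 2))%:R * C%:R / eps * (up_log 2 n)%:R
          = ((p + 2) * up_log 2 n)%:R * (3 * (C%:R / eps)) :> R by rewrite !natrM; ring.
by rewrite /mg_bits natrM; apply: ler_pM; rewrite ?ler0n.
Qed.

Unset Implicit Arguments.

Theorem theorem5p6 (R : realFieldType) (p : nat) :
  exists K0 K1 : R, 0 < K0 /\ 0 < K1 /\
  forall (eps : R) (C n : nat),
    0 < eps < 1 -> (1 <= C)%N -> C%:R <= 1 / (4 * eps) -> (2 <= n)%N ->
    exists (s : nat) (A : stream_alg R n s),
      valid_alg A /\
      s%:R <= K1 * C%:R / eps * (up_log 2 n)%:R /\
      forall sigma : seq 'I_n,
        (size sigma <= n ^ p)%N ->
        (num_heavy sigma <= C)%N ->
        K0 / eps ^+ 2 <= (F0 sigma)%:R ->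
        49 / 50 <= success_prob A eps sigma.
Proof.
exists 1, (3 * (p + 2))%:R; split; first exact: ltr01.
split; first by rewrite ltr0n addn2.
move=> eps C n /andP[eps_gt0 eps_lt1] C_ge1 C_le n_gt1; rewrite -(ler_nat R) in C_ge1.
have inv_ge4C : 4 * C%:R <= eps^-1.
  by move: C_le; rewrite div1r invfM mulrC ler_pdivlMr // mulrC.
have Ceps_ge4 : 4 <= C%:R / eps by rewrite mulrC; nra.
case: (lerP eps^-1 n%:R) => [inv_le_n | n_lt_inv]; last first.
  (* No stream has [n < 1 / eps <= 1 / eps ^ 2 <= F0 <= n]. *)
  exists 0%N, (@det_alg R n 0 ord0 (fun q _ => q) (fun _ => 0)).
  split; first exact: det_alg_valid.
  split; first by rewrite !mulr_ge0 ?invr_ge0 ?ler0n // ltW.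
  move=> sigma _ _; rewrite mul1r -exprVn => F0_ge; exfalso.
  have := F0_le sigma; rewrite -(ler_nat R) => F0_le_n.
  nra.
have [N /andP[N_ge N_le]] : exists N : nat, C%:R / eps <= N%:R <= C%:R / eps + 1.
  apply: (exists_nat_ceil (b := (C * n)%N)); first by rewrite divr_ge0 ?ler0n ?ltW.
  by rewrite natrM; apply: ler_wpM2l.
exists (mg_bits n (C + N) (n ^ p)), (mg_alg R (C + N) (n ^ p) (Ordinal (ltnW n_gt1))).
split; first exact: mg_alg_valid.
split; first by apply: mg_bits_le => //; rewrite eps_gt0 ltW.
move=> sigma size_le heavy_le _.
rewrite mg_alg_success //; first by rewrite ler_pdivrMr // mul1r ler_nat.
have [est_bounds drops_le] := mg_sketch_error N heavy_le.
apply: rel_approx_of_bounds (ltW eps_gt0) _ drops_le est_bounds.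
by rewrite mulrC -ler_pdivrMr.
Qed.
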